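(* Let $G=G'\times H$ be a product of commutative groups with $H$ torsion-free, let $U\subset G'$ be finite (identified with $U\times\{0\}\subset G$), and let $\vartheta$ be any of the functionals $\alpha,\alpha',\alpha'',\beta',\beta''$. Then $\vartheta(U,G)=\vartheta(U,G')$.
   Context: $\vartheta(U,K)$ denotes the functional computed with $A,B$ ranging over nonempty finite subsets of the ambient group $K$: $\alpha(U,K)=\inf_{A\supset U,B\supset U}\frac{|A+B|}{\sqrt{|A||B|}}$; $\alpha'(U,K)=\inf_{A\supset U,B\supset U,|A|=|B|}\frac{|A+B|}{|A|}$; $\alpha''(U,K)=\inf_{A\supset U}\frac{|A+A|}{|A|}$; $\beta'(U,K)=\inf_{A,B,|A|=|B|}\frac{|A+B+U|}{\sqrt{|A||B|}}$; $\beta''(U,K)=\inf_A\frac{|A+A+U|}{|A|}$. *)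

From HB Require Import structures.
From mathcomp Require Import all_boot all_order all_algebra.
From mathcomp Require Import finmap.
From mathcomp Require Import boolp classical_sets reals.
Set Implicit Arguments. Unset Strict Implicit. Unset Printing Implicit Defensive.
Import Order.TTheory GRing.Theory Num.Theory.
Local Open Scope ring_scope.
Local Open Scope fset_scope.

Definition sumset (K : zmodType) (A B : {fset K}) : {fset K} :=
  [fset (a + b)%R | a in A, b in B].

Definition torsion_free (H : zmodType) : Prop :=
  forall (h : H) (n : nat), (0 < n)%N -> h *+ n = 0 -> h = 0.

Definition embed (G' H : zmodType) (U : {fset G'}) : {fset G' * H} :=
  [fset (u, (0 : H)) | u in U].

Section Functionals.
Variables (R : realType) (K : zmodType).
Local Notation card A := ((#|` A|)%:R : R).

Definition alpha (U : {fset K}) : R :=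
  inf [set r | exists A B : {fset K}, [/\ A != fset0, B != fset0,
        U `<=` A, U `<=` B &
        r = card (sumset A B) / Num.sqrt (card A * card B)]].

Definition alpha' (U : {fset K}) : R :=
  inf [set r | exists A B : {fset K}, [/\ A != fset0, B != fset0,
        (U `<=` A) && (U `<=` B), #|` A| = #|` B| &
        r = card (sumset A B) / card A]].

Definition alpha'' (U : {fset K}) : R :=
  inf [set r | exists A : {fset K}, [/\ A != fset0, U `<=` A &
        r = card (sumset A A) / card A]].

Definition beta' (U : {fset K}) : R :=
  inf [set r | exists A B : {fset K}, [/\ A != fset0, B != fset0,
        #|` A| = #|` B| &
        r = card (sumset (sumset A B) U) / Num.sqrt (card A * card B)]].

Definition beta'' (U : {fset K}) : R :=
  inf [set r | exists A : {fset K}, A != fset0 /\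
        r = card (sumset (sumset A A) U) / card A].
End Functionals.

(* A map phi that is injective on a finite set X, preserves the relations
   x + y = z + w and x + y + u = z + w + v on X (u, v in U) and maps one copy
   of U onto the other carries every configuration (A, B) with A, B in X to one
   with the same cardinalities and smaller sumsets, so it can only decrease
   each functional. The embedding g |-> (g, 0) gives
   theta(U x {0}, G' x H) <= theta(U, G'). Conversely, if G' has an element g0
   of infinite order, a finite X in G' x H is mapped to G' by
   (x, h) |-> x + N F(h) g0, where F : H -> Z is a homomorphism on the
   subgroup generated by the second coordinates of X that is injective on them
   (it exists because that subgroup is torsion-free) and N is large. If G' is
   a torsion group, U lies in a finite subgroup T, and A = B = T gives
   theta(U, G') <= 1 (or 0 for beta', beta'' when U is empty), whereas
   theta >= 1 in every group since |A + B| >= max(|A|, |B|). *)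

From HB Require Import structures.
From mathcomp Require Import all_boot all_order all_algebra.
From mathcomp Require Import finmap.
From mathcomp Require Import boolp classical_sets reals.
Set Implicit Arguments. Unset Strict Implicit. Unset Printing Implicit Defensive.
Import Order.TTheory GRing.Theory Num.Theory.
Local Open Scope fset_scope.
Local Open Scope ring_scope.

Section Sumsets.
Variable K : zmodType.
Implicit Types A B C : {fset K}.

Lemma sumsetP A B s :
  reflect (exists a b, [/\ a \in A, b \in B & s = a + b]) (s \in sumset A B).
Proof.
apply: (iffP (imfset2P _ _ _ _ _)) => [[a aA [b bB ->]]|[a [b [aA bB ->]]]].
  by exists a, b.
by exists a => //; exists b.
Qed.

Lemma mem_sumset A B a b : a \in A -> b \in B -> a + b \in sumset A B.
Proof. by move=> aA bB; apply/sumsetP; exists a, b. Qed.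

Lemma sumsetC A B : sumset A B = sumset B A.
Proof.
by apply/fsetP => s; apply/sumsetP/sumsetP => -[a [b [aA bB ->]]];
  exists b, a; rewrite addrC.
Qed.

Lemma sumset0 A : sumset A fset0 = fset0.
Proof. by apply/fsetP => s; rewrite inE; apply/sumsetP => -[a [b [_]]]; rewrite inE. Qed.

Lemma sumset_sub A B C : {in A & B, forall a b, a + b \in C} -> sumset A B `<=` C.
Proof. by move=> ABC; apply/fsubsetP => s /sumsetP [a [b [aA bB ->]]]; apply: ABC. Qed.

Lemma leq_card_sumsetl A B : B != fset0 -> (#|` A| <= #|` sumset A B|)%N.
Proof.
case/fset0Pn => b bB.
have <- : #|` [fset a + b | a in A]| = #|` A|.
  by rewrite card_in_imfset // => x y _ _; apply: addIr.
apply: fsubset_leq_card; apply/fsubsetP => _ /imfsetP [a /= aA ->].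
exact: mem_sumset.
Qed.

Lemma leq_card_sumsetr A B : A != fset0 -> (#|` B| <= #|` sumset A B|)%N.
Proof. by move=> nA; rewrite sumsetC leq_card_sumsetl. Qed.

End Sumsets.

Lemma leq_card_functional_image (T1 T2 : choiceType) (D : {fset T1}) (E : {fset T2})
    (P : T1 -> T2 -> Prop) :
  (forall x y y', P x y -> P x y' -> y = y') ->
  (forall y, y \in E -> exists2 x, x \in D & P x y) ->
  (#|` E| <= #|` D|)%N.
Proof.
have [-> _ _|/fset0Pn [y0 _] Pfun PE] := eqVneq E fset0; first by rewrite cardfs0.
pose f x := xget y0 (fun y => y \in E /\ P x y).
suff /fsubset_leq_card ED : E `<=` f @` D by exact: leq_trans ED (leq_imfset_card _ _ _).
apply/fsubsetP => y yE; have [x xD Pxy] := PE y yE.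
apply/imfsetP; exists x => //.
have [_ /(Pfun _ _ _ Pxy)//] : (fun y => y \in E /\ P x y) (f x).
by apply: (xgetPex y0 (P := fun y => y \in E /\ P x y)); exists y.
Qed.

Definition freiman_inj (K1 K2 : zmodType) (phi : K1 -> K2) (X U1 : {fset K1})
    (U2 : {fset K2}) : Prop :=
  [/\ {in X &, injective phi},
      forall x y z w, x \in X -> y \in X -> z \in X -> w \in X ->
        x + y = z + w -> phi x + phi y = phi z + phi w,
      forall x y z w u v, x \in X -> y \in X -> z \in X -> w \in X ->
        u \in U1 -> v \in U1 ->
        x + y + u = z + w + v -> phi x + phi y + phi u = phi z + phi w + phi v
    & phi @` U1 = U2].

Section FreimanImages.
Variables (K1 K2 : zmodType) (phi : K1 -> K2) (X U1 : {fset K1}) (U2 : {fset K2}).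
Hypothesis fphi : freiman_inj phi X U1 U2.
Variables A B : {fset K1}.
Hypotheses (AX : A `<=` X) (BX : B `<=` X).

Lemma card_freiman_image : #|` phi @` A| = #|` A|.
Proof.
case: fphi => inj _ _ _; move/fsubsetP: AX => AX'.
by rewrite card_in_imfset // => x y /AX' xX /AX' yX; apply: inj.
Qed.

Lemma freiman_image_neq0 : (phi @` A != fset0) = (A != fset0).
Proof. by rewrite -!cardfs_gt0 card_freiman_image. Qed.

Lemma freiman_image_sup : U1 `<=` A -> U2 `<=` phi @` A.
Proof. by case: fphi => _ _ _ <- /fsubsetP UA; apply: subset_imfset. Qed.

Lemma leq_card_freiman_sumset :
  (#|` sumset (phi @` A) (phi @` B)| <= #|` sumset A B|)%N.
Proof.
case: fphi => _ hom2 _ _; move/fsubsetP: AX => AX'; move/fsubsetP: BX => BX'.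
apply: (@leq_card_functional_image _ _ _ _
  (fun s t => exists a b, [/\ a \in A, b \in B, s = a + b & t = phi a + phi b])).
  move=> _ t t' [a [b [aA bB -> ->]]] [a' [b' [aA' bB' e ->]]].
  by apply: hom2 e; [apply: AX' | apply: BX' | apply: AX' | apply: BX'].
move=> _ /sumsetP [_ [_ [/imfsetP [a /= aA ->] /imfsetP [b /= bB ->] ->]]].
by exists (a + b); [exact: mem_sumset | exists a, b].
Qed.

Lemma leq_card_freiman_sumset3 :
  (#|` sumset (sumset (phi @` A) (phi @` B)) U2| <= #|` sumset (sumset A B) U1|)%N.
Proof.
case: fphi => _ _ hom3 <-; move/fsubsetP: AX => AX'; move/fsubsetP: BX => BX'.
apply: (@leq_card_functional_image _ _ _ _ (fun s t => exists a b u,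
  [/\ a \in A, b \in B, u \in U1, s = a + b + u & t = phi a + phi b + phi u])).
  move=> _ t t' [a [b [u [aA bB uU -> ->]]]] [a' [b' [u' [aA' bB' uU' e ->]]]].
  by apply: hom3 e; [apply: AX' | apply: BX' | apply: AX' | apply: BX' | |].
move=> _ /sumsetP [_ [_ [/sumsetP [_ [_ [/imfsetP [a /= aA ->]
  /imfsetP [b /= bB ->] ->]]] /imfsetP [u /= uU ->] ->]]].
by exists (a + b + u); [do 2 apply: mem_sumset => // | exists a, b, u].
Qed.

End FreimanImages.

Lemma inf_le_of_dominated (R : realType) (S1 S2 : set R) :
  (S1 !=set0)%classic -> (forall y, S2 y -> 0 <= y) ->
  (forall x, S1 x -> exists2 y, S2 y & y <= x) -> inf S2 <= inf S1.
Proof.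
move=> S1n0 S2ge0 dom; apply: lb_le_inf => // x /dom [y S2y yx].
by apply: le_trans yx; apply: ge_inf => //; exists 0.
Qed.

Lemma fset1U_neq0 (K : choiceType) (x : K) (A : {fset K}) : x |` A != fset0.
Proof. by apply/fset0Pn; exists x; apply: fset1U1. Qed.

Section FreimanMonotone.
Variables (R : realType) (K1 K2 : zmodType) (U1 : {fset K1}) (U2 : {fset K2}).
Hypothesis freiman : forall X : {fset K1}, exists phi, freiman_inj phi X U1 U2.

Lemma alpha_freiman : alpha R U2 <= alpha R U1.
Proof.
apply: inf_le_of_dominated.
- by eexists; exists (0 |` U1), (0 |` U1); split; rewrite ?fset1U_neq0 ?fsubsetU1.
- by move=> _ [A [B [_ _ _ _ ->]]]; rewrite divr_ge0 ?sqrtr_ge0.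
move=> _ [A [B [nA nB UA UB ->]]].
have [phi fphi] := freiman (A `|` B).
have [AX BX] := (fsubsetUl A B, fsubsetUr A B).
eexists.
  exists (phi @` A), (phi @` B); split;
    by rewrite ?(freiman_image_neq0 fphi) ?(freiman_image_sup fphi).
by rewrite !(card_freiman_image fphi) // ler_wpM2r ?invr_ge0 ?sqrtr_ge0 // ler_nat
  (leq_card_freiman_sumset fphi).
Qed.

Lemma alpha'_freiman : alpha' R U2 <= alpha' R U1.
Proof.
apply: inf_le_of_dominated.
- by eexists; exists (0 |` U1), (0 |` U1); split; rewrite ?fset1U_neq0 ?fsubsetU1.
- by move=> _ [A [B [_ _ _ _ ->]]]; rewrite divr_ge0.
move=> _ [A [B [nA nB /andP [UA UB] cAB ->]]].
have [phi fphi] := freiman (A `|` B).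
have [AX BX] := (fsubsetUl A B, fsubsetUr A B).
eexists.
  exists (phi @` A), (phi @` B); split=> //; rewrite ?(card_freiman_image fphi) //;
    by rewrite ?(freiman_image_neq0 fphi) ?(freiman_image_sup fphi).
by rewrite (card_freiman_image fphi) // ler_wpM2r ?invr_ge0 // ler_nat
  (leq_card_freiman_sumset fphi).
Qed.

Lemma alpha''_freiman : alpha'' R U2 <= alpha'' R U1.
Proof.
apply: inf_le_of_dominated.
- by eexists; exists (0 |` U1); split; rewrite ?fset1U_neq0 ?fsubsetU1.
- by move=> _ [A [_ _ ->]]; rewrite divr_ge0.
move=> _ [A [nA UA ->]].
have [phi fphi] := freiman A.
have AX := fsubset_refl A.
eexists.
  exists (phi @` A); split;
    by rewrite ?(freiman_image_neq0 fphi) ?(freiman_image_sup fphi).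
by rewrite (card_freiman_image fphi) // ler_wpM2r ?invr_ge0 // ler_nat
  (leq_card_freiman_sumset fphi).
Qed.

Lemma beta'_freiman : beta' R U2 <= beta' R U1.
Proof.
apply: inf_le_of_dominated.
- by eexists; exists [fset 0], [fset 0]; split; rewrite -?cardfs_gt0 ?cardfs1.
- by move=> _ [A [B [_ _ _ ->]]]; rewrite divr_ge0 ?sqrtr_ge0.
move=> _ [A [B [nA nB cAB ->]]].
have [phi fphi] := freiman (A `|` B).
have [AX BX] := (fsubsetUl A B, fsubsetUr A B).
eexists.
  exists (phi @` A), (phi @` B); split=> //; rewrite ?(card_freiman_image fphi) //;
    by rewrite ?(freiman_image_neq0 fphi).
by rewrite !(card_freiman_image fphi) // ler_wpM2r ?invr_ge0 ?sqrtr_ge0 // ler_nat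
  (leq_card_freiman_sumset3 fphi).
Qed.

Lemma beta''_freiman : beta'' R U2 <= beta'' R U1.
Proof.
apply: inf_le_of_dominated.
- by eexists; exists [fset 0]; split; rewrite -?cardfs_gt0 ?cardfs1.
- by move=> _ [A [_ ->]]; rewrite divr_ge0.
move=> _ [A [nA ->]].
have [phi fphi] := freiman A.
have AX := fsubset_refl A.
eexists; first by exists (phi @` A); split; rewrite ?(freiman_image_neq0 fphi).
by rewrite (card_freiman_image fphi) // ler_wpM2r ?invr_ge0 // ler_nat
  (leq_card_freiman_sumset3 fphi).
Qed.

Lemma freiman_functionals_le :
  [/\ alpha R U2 <= alpha R U1, alpha' R U2 <= alpha' R U1,
      alpha'' R U2 <= alpha'' R U1, beta' R U2 <= beta' R U1 &
      beta'' R U2 <= beta'' R U1].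
Proof.
split; [exact: alpha_freiman | exact: alpha'_freiman | exact: alpha''_freiman
       | exact: beta'_freiman | exact: beta''_freiman].
Qed.

End FreimanMonotone.

Section RatioBounds.
Variable R : rcfType.
Implicit Types a b c t : nat.

Lemma natr_div_ge1 a c : (0 < a)%N -> (a <= c)%N -> 1 <= c%:R / a%:R :> R.
Proof. by move=> a_gt0 ac; rewrite ler_pdivlMr ?ltr0n // mul1r ler_nat. Qed.

Lemma natr_div_le1 c t : (0 < t)%N -> (c <= t)%N -> c%:R / t%:R <= 1 :> R.
Proof. by move=> t_gt0 ct; rewrite ler_pdivrMr ?ltr0n // mul1r ler_nat. Qed.

Lemma sqrt_natr_sq t : Num.sqrt (t%:R * t%:R) = t%:R :> R.
Proof. by rewrite -expr2 sqrtr_sqr ger0_norm. Qed.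

Lemma natr_div_sqrtM_ge1 a b c : (0 < a)%N -> (0 < b)%N -> (a <= c)%N -> (b <= c)%N ->
  1 <= c%:R / Num.sqrt (a%:R * b%:R) :> R.
Proof.
move=> a_gt0 b_gt0 ac bc.
rewrite ler_pdivlMr ?sqrtr_gt0 -?natrM ?ltr0n ?muln_gt0 ?a_gt0 // mul1r.
by rewrite -(sqrt_natr_sq c) ler_sqrt -?natrM ?ler0n // ler_nat leq_mul.
Qed.

Lemma natr_div_sqrt_sq_le1 c t : (0 < t)%N -> (c <= t)%N ->
  c%:R / Num.sqrt (t%:R * t%:R) <= 1 :> R.
Proof. by rewrite sqrt_natr_sq; apply: natr_div_le1. Qed.

End RatioBounds.

Section SubsemigroupBound.
Variables (R : realType) (K1 K2 : zmodType) (T U : {fset K1}) (V : {fset K2}).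
Hypotheses (T0 : 0 \in T) (UT : U `<=` T) (TT : sumset T T `<=` T).

Let T_gt0 : (0 < #|` T|)%N.
Proof. by rewrite cardfs_gt0; apply/fset0Pn; exists 0. Qed.

Let card_TT : (#|` sumset T T| <= #|` T|)%N.
Proof. exact: fsubset_leq_card. Qed.

Let card_TTU : (#|` sumset (sumset T T) U| <= #|` T|)%N.
Proof.
apply/fsubset_leq_card/sumset_sub => a u /(fsubsetP TT) aT /(fsubsetP UT) uT.
by apply: (fsubsetP TT); apply: mem_sumset.
Qed.

Lemma alpha_le_subsemigroup : alpha R U <= alpha R V.
Proof.
apply: inf_le_of_dominated.
- by eexists; exists (0 |` V), (0 |` V); split; rewrite ?fset1U_neq0 ?fsubsetU1.
- by move=> _ [A [B [_ _ _ _ ->]]]; rewrite divr_ge0 ?sqrtr_ge0.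
move=> _ [A [B [nA nB _ _ ->]]].
exists (#|` sumset T T|%:R / Num.sqrt (#|` T|%:R * #|` T|%:R)).
  by exists T, T; split; rewrite -?cardfs_gt0.
rewrite (le_trans (natr_div_sqrt_sq_le1 _ _ _)) //.
by rewrite natr_div_sqrtM_ge1 ?cardfs_gt0 ?leq_card_sumsetl ?leq_card_sumsetr.
Qed.

Lemma alpha'_le_subsemigroup : alpha' R U <= alpha' R V.
Proof.
apply: inf_le_of_dominated.
- by eexists; exists (0 |` V), (0 |` V); split; rewrite ?fset1U_neq0 ?fsubsetU1.
- by move=> _ [A [B [_ _ _ _ ->]]]; rewrite divr_ge0.
move=> _ [A [B [nA nB _ _ ->]]].
exists (#|` sumset T T|%:R / #|` T|%:R).
  by exists T, T; split; rewrite -?cardfs_gt0 ?UT.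
rewrite (le_trans (natr_div_le1 _ _ _)) //.
by rewrite natr_div_ge1 ?cardfs_gt0 ?leq_card_sumsetl.
Qed.

Lemma alpha''_le_subsemigroup : alpha'' R U <= alpha'' R V.
Proof.
apply: inf_le_of_dominated.
- by eexists; exists (0 |` V); split; rewrite ?fset1U_neq0 ?fsubsetU1.
- by move=> _ [A [_ _ ->]]; rewrite divr_ge0.
move=> _ [A [nA _ ->]].
exists (#|` sumset T T|%:R / #|` T|%:R).
  by exists T; split; rewrite -?cardfs_gt0.
rewrite (le_trans (natr_div_le1 _ _ _)) //.
by rewrite natr_div_ge1 ?cardfs_gt0 ?leq_card_sumsetl.
Qed.

Hypothesis UV : U != fset0 -> V != fset0.

Lemma beta'_le_subsemigroup : beta' R U <= beta' R V.
Proof.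
apply: inf_le_of_dominated.
- by eexists; exists [fset 0], [fset 0]; split; rewrite -?cardfs_gt0 ?cardfs1.
- by move=> _ [A [B [_ _ _ ->]]]; rewrite divr_ge0 ?sqrtr_ge0.
move=> _ [A [B [nA nB cAB ->]]].
exists (#|` sumset (sumset T T) U|%:R / Num.sqrt (#|` T|%:R * #|` T|%:R)).
  by exists T, T; split; rewrite -?cardfs_gt0.
have [->|/UV nV] := eqVneq U fset0.
  by rewrite sumset0 cardfs0 mul0r divr_ge0 ?sqrtr_ge0.
rewrite (le_trans (natr_div_sqrt_sq_le1 _ _ _)) //.
have ABV := leq_card_sumsetl (sumset A B) nV.
by rewrite natr_div_sqrtM_ge1 ?cardfs_gt0 // (leq_trans _ ABV)
  ?leq_card_sumsetl ?leq_card_sumsetr.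
Qed.

Lemma beta''_le_subsemigroup : beta'' R U <= beta'' R V.
Proof.
apply: inf_le_of_dominated.
- by eexists; exists [fset 0]; split; rewrite -?cardfs_gt0 ?cardfs1.
- by move=> _ [A [_ ->]]; rewrite divr_ge0.
move=> _ [A [nA ->]].
exists (#|` sumset (sumset T T) U|%:R / #|` T|%:R).
  by exists T; rewrite -?cardfs_gt0.
have [->|/UV nV] := eqVneq U fset0; first by rewrite sumset0 cardfs0 mul0r divr_ge0.
rewrite (le_trans (natr_div_le1 _ _ _)) //.
have AAV := leq_card_sumsetl (sumset A A) nV.
by rewrite natr_div_ge1 ?cardfs_gt0 // (leq_trans _ AAV) ?leq_card_sumsetl.
Qed.

Lemma subsemigroup_functionals_le :
  [/\ alpha R U <= alpha R V, alpha' R U <= alpha' R V,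
      alpha'' R U <= alpha'' R V, beta' R U <= beta' R V &
      beta'' R U <= beta'' R V].
Proof.
split; [exact: alpha_le_subsemigroup | exact: alpha'_le_subsemigroup
       | exact: alpha''_le_subsemigroup | exact: beta'_le_subsemigroup
       | exact: beta''_le_subsemigroup].
Qed.

End SubsemigroupBound.

Lemma torsion_fsubsemigroup (G : zmodType) :
  (forall g : G, exists2 n, (0 < n)%N & g *+ n = 0) ->
  forall s : seq G, exists T : {fset G},
    [/\ 0 \in T, {subset s <= T} & sumset T T `<=` T].
Proof.
move=> torsion; elim=> [|u s [T [T0 sT TT]]].
  exists [fset 0]; split=> //; first exact: fset11.
  by apply: sumset_sub => _ _ /fset1P-> /fset1P->; rewrite addr0 fset11.
have [n n_gt0 un0] := torsion u.
pose M := [fset u *+ i | i in iota 0 n].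
have uM m : u *+ m \in M.
  apply/imfsetP; exists (m %% n)%N; first by rewrite mem_iota ltn_pmod.
  by rewrite {1}(divn_eq m n) mulrnDr mulnC mulrnA un0 mul0rn add0r.
have TM t m : t \in T -> t + u *+ m \in sumset T M by move=> tT; apply: mem_sumset.
exists (sumset T M); split.
- by rewrite -[0]addr0 -(mulr0n u) TM.
- move=> x /predU1P [->|/sT xT]; last by rewrite -[x]addr0 -(mulr0n u) TM.
  by rewrite -[u]add0r -[u in _ + u]mulr1n TM.
apply: sumset_sub => x y /sumsetP [t1 [_ [t1T /imfsetP [i _ ->] ->]]].
move=> /sumsetP [t2 [_ [t2T /imfsetP [j _ ->] ->]]].
by rewrite addrACA -mulrnDr TM // (fsubsetP TT) // mem_sumset.
Qed.

Section IntCombinations.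
Variable K : zmodType.
Implicit Types (s : nat -> K) (c : nat -> int).

Definition zcomb s n c : K := \sum_(i < n) s i *~ c i.

Lemma zcombS s n c : zcomb s n.+1 c = zcomb s n c + s n *~ c n.
Proof. by rewrite /zcomb big_ord_recr. Qed.

Lemma eq_zcomb s s' n c :
  (forall i, (i < n)%N -> s i = s' i) -> zcomb s n c = zcomb s' n c.
Proof. by move=> ss'; apply: eq_bigr => i _; rewrite ss'. Qed.

Lemma zcombZl s n c m : zcomb (fun i => s i *~ m) n c = zcomb s n c *~ m.
Proof. by rewrite /zcomb mulrz_suml; apply: eq_bigr => i _; rewrite mulrzAC. Qed.

Lemma zcombD s n c c' : zcomb s n (fun i => c i + c' i) = zcomb s n c + zcomb s n c'.
Proof. by rewrite /zcomb -big_split; apply: eq_bigr => i _; rewrite mulrzDr. Qed.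

Lemma zcombB s n c c' : zcomb s n (fun i => c i - c' i) = zcomb s n c - zcomb s n c'.
Proof. by rewrite /zcomb -sumrB; apply: eq_bigr => i _; rewrite mulrzBr. Qed.

Lemma zcombMr s n c m : zcomb s n (fun i => c i * m) = zcomb s n c *~ m.
Proof. by rewrite /zcomb mulrz_suml; apply: eq_bigr => i _; rewrite mulrzA. Qed.

Lemma zcomb_delta s n a : (a < n)%N -> zcomb s n (fun i => (i == a)%:R) = s a.
Proof.
move=> an; rewrite /zcomb (bigD1 (Ordinal an)) //= eqxx mulr1z big1 ?addr0 // => i.
by rewrite -val_eqE /= => /negbTE ->; rewrite mulr0z.
Qed.

(* The combination [c0 n * c - c n * c0] has a vanishing [n]-th coefficient. *)
Lemma zcomb_elim s n c0 c :
  zcomb s n (fun i => c i * c0 n - c0 i * c n) =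
  zcomb s n.+1 c *~ c0 n - zcomb s n.+1 c0 *~ c n.
Proof.
rewrite zcombB !zcombMr !zcombS !mulrzDl -!mulrzA mulrC.
by rewrite opprD addrACA subrr addr0.
Qed.

End IntCombinations.

Lemma torsion_free_mulrz_eq0 (H : zmodType) (x : H) (m : int) :
  torsion_free H -> (x *~ m == 0) = (m == 0) || (x == 0).
Proof.
move=> tfH; have [->|m0] := eqVneq m 0; first by rewrite mulr0z eqxx.
apply/eqP/eqP => [|->]; last exact: mul0rz.
case: m m0 => k k0.
  by rewrite -pmulrn; apply: tfH; rewrite lt0n; apply: contraNneq k0 => ->.
by rewrite NegzE mulrNz => /eqP; rewrite oppr_eq0 -pmulrn => /eqP /tfH; apply.
Qed.

Section SeparatingFunctional.
Variables (H : zmodType) (s : nat -> H).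

(* [l] defines a homomorphism from the subgroup generated by [s 0, ..., s n.-1]
   to [int] (it kills every relation) that does not vanish on the [P j]. *)
Definition separating n (I : finType) (P : I -> nat -> int) (l : nat -> int) : Prop :=
  (forall c, zcomb s n c = 0 -> zcomb l n c = 0) /\
  (forall j, zcomb s n (P j) != 0 -> zcomb l n (P j) != 0).

Variable n : nat.
Hypothesis IH : forall (I : finType) (P : I -> nat -> int), exists l, separating n P l.

Lemma separating_dependent (c0 : nat -> int) : torsion_free H ->
  c0 n != 0 -> zcomb s n.+1 c0 = 0 ->
  forall (I : finType) (P : I -> nat -> int), exists l, separating n.+1 P l.
Proof.
(* Eliminate [s n] using the relation [c0]; rescaling [l] by [m] lets its
   extension to [n.+1] kill [c0] with an integer value at [n]. *)
move=> tfH c0n0 s_c0 I P; set m := c0 n.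
pose d c i := c i * m - c0 i * c n.
have s_d c : zcomb s n (d c) = zcomb s n.+1 c *~ m.
  by rewrite zcomb_elim s_c0 mul0rz subr0.
have [l [l_rel l_sep]] := IH (fun j => d (P j)).
pose l' i := if (i < n)%N then l i *~ m else - zcomb l n c0.
have l'_low c : zcomb l' n c = zcomb l n c *~ m.
  by rewrite -zcombZl; apply: eq_zcomb => i i_lt; rewrite /l' i_lt.
have l'_c0 : zcomb l' n.+1 c0 = 0 by rewrite zcombS l'_low /l' ltnn mulNrz subrr.
have l'_d c : zcomb l' n.+1 c = zcomb l n (d c).
  by apply: (mulIf c0n0); rewrite -!mulrzz -l'_low zcomb_elim l'_c0 mul0rz subr0.
exists l'; split => [c s_c|j s_Pj].
  by rewrite l'_d l_rel // s_d s_c mul0rz.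
by rewrite l'_d l_sep // s_d torsion_free_mulrz_eq0 // negb_or c0n0.
Qed.

Lemma separating_free :
  (forall c, zcomb s n.+1 c = 0 -> c n = 0) ->
  forall (I : finType) (P : I -> nat -> int), exists l, separating n.+1 P l.
Proof.
(* [s n] is independent of the others: give it a weight exceeding every
   [|zcomb l n (P j)|]. *)
move=> free I P; have [l [l_rel l_sep]] := IH P.
pose t : int := 1 + \sum_j `|zcomb l n (P j)|.
pose l' i := if (i < n)%N then l i else t.
have l'E c : zcomb l' n.+1 c = zcomb l n c + t * c n.
  rewrite zcombS /l' ltnn mulrzz; congr (_ + _).
  by apply: eq_zcomb => i i_lt; rewrite i_lt.
have zcomb_low c : c n = 0 -> zcomb s n.+1 c = zcomb s n c.
  by move=> cn0; rewrite zcombS cn0 mulr0z addr0.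
exists l'; split => [c s_c|j s_Pj].
  have cn0 := free c s_c.
  by rewrite l'E cn0 mulr0 addr0 l_rel // -zcomb_low.
rewrite l'E; have [Pjn0|Pjn] := eqVneq (P j n) 0.
  by rewrite Pjn0 mulr0 addr0 l_sep // -zcomb_low.
have t_gt0 : 0 < t by rewrite ltr_pwDl ?sumr_ge0.
have small : `|zcomb l n (P j)| < t.
  by rewrite ltr_pwDl // (bigD1 j) //= lerDl sumr_ge0.
have large : t <= `|t * P j n|.
  by rewrite normrM gtr0_norm // ler_pMr // -gtz0_ge1 normr_gt0.
rewrite addr_eq0; apply: contraTneq small => ->.
by rewrite normrN -leNgt.
Qed.

End SeparatingFunctional.

Lemma exists_separating (H : zmodType) (s : nat -> H) n (I : finType)
    (P : I -> nat -> int) :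
  torsion_free H -> exists l, separating s n P l.
Proof.
move=> tfH; elim: n I P => [|n IH] I P.
  by exists (fun=> 0); split=> [c _|j]; rewrite /zcomb big_ord0 ?eqxx.
have [[c0 [c0n s_c0]]|free] :=
  pselect (exists c0 : nat -> int, c0 n != 0 /\ zcomb s n.+1 c0 = 0).
  exact: separating_dependent IH c0 tfH c0n s_c0 I P.
apply: separating_free IH _ I P => c s_c.
by have [//|cn] := eqVneq (c n) 0; exfalso; apply: free; exists c.
Qed.

Lemma torsion_free_freiman_int (H : zmodType) (S : seq H) : torsion_free H ->
  exists F : H -> int, [/\ F 0 = 0, {in S &, injective F} &
    forall x y z w, x \in S -> y \in S -> z \in S -> w \in S ->
      x + y = z + w -> F x + F y = F z + F w].
Proof.
move=> tfH; pose n := size S; pose s i := nth 0 S i.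
pose delta (a i : nat) : int := (i == a)%:R.
(* Separating every difference [s a - s b] makes [F] injective on [S]. *)
pose P (ab : 'I_n * 'I_n) i := delta ab.1 i - delta ab.2 i.
have [l [l_rel l_sep]] := exists_separating s n P tfH.
pose F h := l (index h S) - l (index 0 S).
have idxS x : x \in S -> (index x S < n)%N by rewrite index_mem.
have zcomb_idx (K : zmodType) (t : nat -> K) x : x \in S ->
    zcomb t n (delta (index x S)) = t (index x S).
  by move=> xS; rewrite zcomb_delta ?idxS.
have s_idx x : x \in S -> s (index x S) = x by move=> xS; rewrite /s nth_index.
exists F; split; first by rewrite /F subrr.
  move=> x y xS yS; apply: contra_eq => xy.
  rewrite /F (inj_eq (addIr _)) -subr_eq0.
  have := l_sep (Ordinal (idxS x xS), Ordinal (idxS y yS)).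
  by rewrite !zcombB !zcomb_idx // !s_idx //; apply; rewrite subr_eq0.
move=> x y z w xS yS zS wS xyzw.
pose c i := (delta (index x S) i + delta (index y S) i)
  - (delta (index z S) i + delta (index w S) i).
have := l_rel c; rewrite !zcombB !zcombD !zcomb_idx // !s_idx // xyzw subrr.
move=> /(_ erefl) /eqP; rewrite subr_eq0 => /eqP l_xyzw.
by rewrite /F addrACA l_xyzw addrACA.
Qed.

Lemma embed_freiman (G' H : zmodType) (U X : {fset G'}) :
  freiman_inj (fun g => (g, 0 : H)) X U (embed H U).
Proof.
split=> //; first by move=> x y _ _ [].
  by move=> x y z w _ _ _ _ e; apply/eqP; rewrite xpair_eqE /= e !addr0 !eqxx.
by move=> x y z w u v _ _ _ _ _ _ e; apply/eqP; rewrite xpair_eqE /= e !addr0 !eqxx.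
Qed.

Section InfiniteOrder.
Variables (G : zmodType) (g0 : G).
Hypothesis g0_inf : forall n, (0 < n)%N -> g0 *+ n != 0.

Lemma infinite_order_mulrz_eq0 (z : int) : (g0 *~ z == 0) = (z == 0).
Proof.
have g0n_eq0 n : (g0 *+ n == 0) = (n == 0)%N.
  by case: n => [|n]; rewrite ?mulr0n ?eqxx // (negbTE (g0_inf _)).
case: z => n; first by rewrite -pmulrn g0n_eq0.
by rewrite NegzE mulrNz oppr_eq0 -pmulrn g0n_eq0.
Qed.

Lemma infinite_order_avoid (D : seq (int * G)) : {in D, forall t, t.1 != 0} ->
  exists N : nat,
    forall m, (N <= m)%N -> {in D, forall t, g0 *~ (t.1 * m%:Z) != t.2}.
Proof.
elim: D => [|t D IH] D_neq0; first by exists 0%N.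
have [N hN] : exists N, _ :=
  IH (fun u uD => D_neq0 u (mem_behead (s := t :: D) uD)).
have t1_neq0 : t.1 != 0 := D_neq0 t (mem_head t D).
have [[m0 t_m0]|t_good] := pselect (exists m0 : nat, g0 *~ (t.1 * m0%:Z) = t.2).
  exists (maxn N m0.+1) => m; rewrite geq_max => /andP [Nm m0m] u.
  case/predU1P => [->|uD]; last exact: hN.
  apply: contraTneq m0m => t_m.
  have : g0 *~ (t.1 * (m%:Z - m0%:Z)) == 0 by rewrite mulrBr mulrzBr t_m t_m0 subrr.
  by rewrite infinite_order_mulrz_eq0 mulf_eq0 (negbTE t1_neq0) subr_eq0 eqz_nat
    => /eqP ->; rewrite ltnn.
exists N => m Nm u /predU1P [->|uD]; last exact: hN.
by apply/eqP => t_m; apply: t_good; exists m.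
Qed.

Variables (H : zmodType) (U : {fset G}).
Hypothesis tfH : torsion_free H.

Lemma freiman_projection (X : {fset G * H}) :
  exists phi, freiman_inj phi X (embed H U) U.
Proof.
have [F [F0 F_inj F_hom]] := torsion_free_freiman_int [seq x.2 | x <- X] tfH.
have X2 x : x \in X -> x.2 \in [seq x.2 | x <- X] by apply: map_f.
pose D := [seq t <- [seq (F q.2 - F p.2, p.1 - q.1) | p <- X, q <- X] | t.1 != 0].
have [N hN] : exists N : nat, forall m, (N <= m)%N ->
    {in D, forall t, g0 *~ (t.1 * m%:Z) != t.2}.
  by apply: infinite_order_avoid => t; rewrite mem_filter => /andP [].
(* [N] is chosen so that no difference [p.1 - q.1] of points of [X] equals
   [(F q.2 - F p.2) N g0], which makes [phi] injective on [X]. *)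
pose phi x := x.1 + g0 *~ (F x.2 * N%:Z).
have phiD x y : phi x + phi y = (x.1 + y.1) + g0 *~ ((F x.2 + F y.2) * N%:Z).
  by rewrite /phi addrACA -mulrzDr -mulrDl.
have phi_embed u : phi (u, 0) = u by rewrite /phi F0 mul0r mulr0z addr0.
exists phi; split.
- move=> [p1 p2] [q1 q2] pX qX; rewrite /phi /= => e.
  have [p2q2|p2q2] := eqVneq p2 q2.
    by rewrite p2q2 in e *; rewrite (addIr _ e).
  have tD : (F q2 - F p2, p1 - q1) \in D.
    rewrite mem_filter /= subr_eq0 eq_sym (inj_in_eq F_inj)
      ?(X2 _ pX) ?(X2 _ qX) //=.
    by rewrite p2q2; apply/allpairsP; exists ((p1, p2), (q1, q2)).
  have := hN N (leqnn N) _ tD; rewrite /= mulrBl mulrzBr.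
  suff -> : p1 - q1 = g0 *~ (F q2 * N) - g0 *~ (F p2 * N) by rewrite eqxx.
  by rewrite -[p1](addrK (g0 *~ (F p2 * N))) e addrAC [q1 + _]addrC addrK.
- move=> [x1 x2] [y1 y2] [z1 z2] [w1 w2] xX yX zX wX [e1 e2].
  by rewrite !phiD /= e1 (F_hom _ _ _ _ (X2 _ xX) (X2 _ yX) (X2 _ zX) (X2 _ wX) e2).
- move=> [x1 x2] [y1 y2] [z1 z2] [w1 w2] u v xX yX zX wX.
  move=> /imfsetP [u1 _ ->] /imfsetP [v1 _ ->] [e1 e2]; rewrite !addr0 in e2.
  rewrite !phi_embed !phiD /= addrAC [RHS]addrAC e1.
  by rewrite (F_hom _ _ _ _ (X2 _ xX) (X2 _ yX) (X2 _ zX) (X2 _ wX) e2).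
apply/fsetP => g; apply/imfsetP/idP => [[_ /imfsetP [u uU ->] ->]|gU].
  by rewrite phi_embed.
by exists (g, 0); [apply/imfsetP; exists g | rewrite phi_embed].
Qed.

End InfiniteOrder.

Theorem mainTheorem17 (R : realType) (G' H : zmodType)
    (hH : torsion_free H) (U : {fset G'}) :
  [/\ alpha R (embed H U) = alpha R U,
      alpha' R (embed H U) = alpha' R U,
      alpha'' R (embed H U) = alpha'' R U,
      beta' R (embed H U) = beta' R U &
      beta'' R (embed H U) = beta'' R U].
Proof.
have emb X : exists phi, freiman_inj phi X U (embed H U).
  by exists (fun g => (g, 0)); apply: embed_freiman.
have [le1 le2 le3 le4 le5] := freiman_functionals_le R emb.
suff [ge1 ge2 ge3 ge4 ge5] : [/\ alpha R U <= alpha R (embed H U),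
    alpha' R U <= alpha' R (embed H U), alpha'' R U <= alpha'' R (embed H U),
    beta' R U <= beta' R (embed H U) & beta'' R U <= beta'' R (embed H U)].
  by split; apply/le_anti/andP; split.
have [[g0 g0_inf]|no_inf] :=
  pselect (exists g0 : G', forall n, (0 < n)%N -> g0 *+ n != 0).
  exact: freiman_functionals_le (freiman_projection g0_inf U hH).
have torsion (g : G') : exists2 n, (0 < n)%N & g *+ n = 0.
  apply: contrapT => g_inf; apply: no_inf; exists g => n n_gt0.
  by apply/eqP => gn0; apply: g_inf; exists n.
have [T [T0 /fsubsetP UT TT]] := torsion_fsubsemigroup torsion U.
apply: subsemigroup_functionals_le T0 UT TT _.
by rewrite -!cardfs_gt0 /embed card_in_imfset // => x y _ _ [].
Qed.
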